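(* Let $G$ be a finite group and $S\in\mathcal F(G)$. (1) If $[S]$ is an idempotent of $\mathcal C(\mathcal B(G),\mathcal F(G))$, then $\pi(S)$ is a subgroup of $G$ contained in $G'$. (2) $[1_{\mathcal F(G)}]=\mathcal B(\mathsf Z(G))$. In particular, if $g\in\mathsf Z(G)$ then $g^{[\mathrm{ord}(g)]}\sim 1_{\mathcal F(G)}$. (3) $[S]$ is the smallest element of the set of idempotents of $\mathcal C(\mathcal B(G),\mathcal F(G))$ with respect to the Rees order if and only if $\pi(S)=G'$.
   Context: Let $G$ be a finite group written multiplicatively with identity $1_G$; $G'$ is its commutator subgroup and $\mathsf Z(G)$ its center. For $G_0\subset G$, $\mathcal F(G_0)$ is the free abelian monoid with basis $G_0$; its elements are sequences $S=g_1\boldsymbol{\cdot}\ldots\boldsymbol{\cdot}g_\ell$ (operation $\boldsymbol{\cdot}$ = concatenation, identity the empty sequence $1_{\mathcal F(G)}$; $g^{[k]}$ is the sequence consisting of $k$ copies of $g$). $\pi(S)=\{g_{\tau(1)}\cdots g_{\tau(\ell)}:\tau\text{ a permutation of }[1,\ell]\}$, $\pi(1_{\mathcal F(G)})=\{1_G\}$, and $\mathcal B(G_0)=\{S\in\mathcal F(G_0):1_G\in\pi(S)\}$. For $S,S'\in\mathcal F(G)$, $S\sim S'$ means: for all $T\in\mathcal F(G)$, $S\boldsymbol{\cdot}T\in\mathcal B(G)\iff S'\boldsymbol{\cdot}T\in\mathcal B(G)$; this is a congruence, $[S]$ is the class of $S$, and $\mathcal C(\mathcal B(G),\mathcal F(G))$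 is the set of classes, a commutative semigroup written additively with $[S]+[T]=[S\boldsymbol{\cdot}T]$. The Rees order on idempotents of a commutative semigroup is $e\le f$ iff $e+f=e$. *)

(* Sequences over G (elements of F(G)) are modelled as
   [seq gT]; all notions below are invariant under permutation. *)
From mathcomp Require Import all_boot all_order all_fingroup all_solvable.
Set Implicit Arguments. Unset Strict Implicit. Unset Printing Implicit Defensive.
Local Open Scope group_scope.

Section Seqs.
Variable gT : finGroupType.

Definition seqprod (t : seq gT) : gT := \prod_(x <- t) x.

Definition piS (S : seq gT) : {set gT} :=
  [set x | has (fun t => seqprod t == x) (permutations S)].

Definition inB (S : seq gT) : bool := 1 \in piS S.

Definition simS (S S' : seq gT) : Prop :=
  forall T : seq gT, inB (S ++ T) = inB (S' ++ T).

Definition idemS (S : seq gT) : Prop := simS (S ++ S) S.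

(* Rees order on classes: [S] <= [T] iff [S]+[T] = [S] *)
Definition reesle (S T : seq gT) : Prop := simS (S ++ T) S.
End Seqs.

(* Probing with one extra element shows that S.y lies in B(G) iff y^-1 lies in
   pi(S), so S ~ S' forces pi(S) = pi(S').  Rotating an ordering conjugates its
   product, hence all elements of pi(S) lie in one coset of G'.  If [S] is
   idempotent then pi(S)pi(S) is contained in pi(SS) = pi(S), so pi(S) is a
   subgroup, hence inside G'.  Once G' is contained in pi(A), whether A.U lies in
   B(G) only depends on whether the product of U lies in G'; such an A exists
   (concatenate enough blocks x^-1 y^-1 x y), and [A] is then below every
   idempotent.  Central elements can be pulled out of any ordering, and if S ~ 1
   then probing with (g h g^-1)^-1 . h shows that every g in S is central. *)

From Pilot Require Import Defs. (* order.v also exports a [seqprod] *)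
From mathcomp Require Import all_boot all_order all_fingroup all_solvable.
Import Defs.
Set Implicit Arguments. Unset Strict Implicit. Unset Printing Implicit Defensive.
Local Open Scope group_scope.

Lemma perm_cons_split (T : eqType) (t u : seq T) (x : T) :
  perm_eq t (x :: u) -> exists p1 p2, t = p1 ++ x :: p2 /\ perm_eq (p1 ++ p2) u.
Proof.
move=> tu; have xt : x \in t by rewrite (perm_mem tu) mem_head.
move: tu; case/splitPr: xt => p1 p2 tu; exists p1, p2; split=> //.
by rewrite -(perm_cons x) -cat1s perm_catCA.
Qed.

Section SequenceProducts.
Variable gT : finGroupType.
Implicit Types (s t u : seq gT) (x y : gT).

Lemma seqprod_nil : seqprod ([::] : seq gT) = 1.
Proof. exact: big_nil. Qed.

Lemma seqprod_cons x s : seqprod (x :: s) = x * seqprod s.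
Proof. exact: big_cons. Qed.

Lemma seqprod_cat s t : seqprod (s ++ t) = seqprod s * seqprod t.
Proof. exact: big_cat. Qed.

Lemma seqprod_seq1 x : seqprod [:: x] = x.
Proof. by rewrite seqprod_cons seqprod_nil mulg1. Qed.

Lemma seqprod_nseq n x : seqprod (nseq n x) = x ^+ n.
Proof. by elim: n => [|n IHn]; rewrite ?seqprod_nil // seqprod_cons IHn expgS. Qed.

Lemma seqprod_catC s t : seqprod (t ++ s) = seqprod (s ++ t) ^ seqprod s.
Proof. by rewrite !seqprod_cat conjgE !mulgA mulVg mul1g. Qed.

Lemma piSP s x : reflect (exists2 t, perm_eq t s & seqprod t = x) (x \in piS s).
Proof.
rewrite inE; apply: (iffP hasP) => [[t]|[t]].
  by rewrite mem_permutations => st /eqP <-; exists t.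
by move=> ts <-; exists t; rewrite ?mem_permutations.
Qed.

Lemma mem_piS_seqprod s : seqprod s \in piS s.
Proof. by apply/piSP; exists s. Qed.

Lemma perm_piS s s' : perm_eq s s' -> piS s = piS s'.
Proof.
move=> ss'; apply/setP=> x; apply/piSP/piSP => -[t ts <-]; exists t => //.
  by rewrite (permPl ts).
by rewrite (permPl ts) perm_sym.
Qed.

Lemma perm_inB s s' : perm_eq s s' -> inB s = inB s'.
Proof. by move=> ss'; rewrite /inB (perm_piS ss'). Qed.

Lemma piS_nil : piS ([::] : seq gT) = [set 1].
Proof.
apply/setP=> x; rewrite in_set1; apply/piSP/eqP => [[t /perm_nilP -> <-]|->].
  exact: seqprod_nil.
by exists [::]; rewrite ?seqprod_nil.
Qed.

Lemma piS_seq1 x : piS [:: x] = [set x].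
Proof.
apply/setP=> y; rewrite in_set1; apply/piSP/eqP => [[t tx <-]|->].
  by rewrite (perm_small_eq _ tx) ?seqprod_seq1.
by exists [:: x]; rewrite ?seqprod_seq1.
Qed.

Lemma mem_piS_cat s t x y : x \in piS s -> y \in piS t -> x * y \in piS (s ++ t).
Proof.
move=> /piSP[s1 s1s <-] /piSP[t1 t1t <-]; apply/piSP; exists (s1 ++ t1).
  by rewrite perm_cat.
by rewrite seqprod_cat.
Qed.

Lemma piS_catl s t : 1 \in piS t -> piS s \subset piS (s ++ t).
Proof. by move=> t1; apply/subsetP=> x xs; rewrite -[x]mulg1 mem_piS_cat. Qed.

Lemma piS_catr s t : 1 \in piS s -> piS t \subset piS (s ++ t).
Proof. by move=> s1; apply/subsetP=> x xt; rewrite -[x]mul1g mem_piS_cat. Qed.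

(* An ordering of x :: s with product 1 can be rotated to start with x. *)
Lemma inB_cons x s : inB (x :: s) = (x^-1 \in piS s).
Proof.
apply/piSP/piSP => [[t txs t1]|[t ts tx]].
  have [p1 [p2 [tE p12s]]] := perm_cons_split txs.
  exists (p2 ++ p1); first by rewrite perm_catC.
  move: (seqprod_catC p1 (x :: p2)); rewrite -tE t1 conj1g cat_cons seqprod_cons.
  by move/eqP; rewrite -eq_invg_mul => /eqP.
by exists (x :: t); rewrite ?perm_cons // seqprod_cons tx mulgV.
Qed.

Lemma simS_piS s s' : simS s s' -> piS s = piS s'.
Proof.
move=> ss'; apply/setP=> x; rewrite -[x]invgK -!inB_cons.
have inB_rot u : inB (x^-1 :: u) = inB (u ++ [:: x^-1]).
  by apply: perm_inB; rewrite cats1 perm_sym perm_rcons.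
by rewrite !inB_rot ss'.
Qed.

End SequenceProducts.

Section DerivedSubgroup.
Variable gT : finGroupType.
Implicit Types (s t : seq gT) (x y : gT).
Local Notation G' := [~: [set: gT], [set: gT]].

Lemma der1_norm x : x \in 'N(G').
Proof. by rewrite (subsetP (normal_norm (der_normal 1 _))) ?inE. Qed.

Lemma coset_der1M x y : coset G' (x * y) = coset G' x * coset G' y.
Proof. exact: morphM (der1_norm x) (der1_norm y). Qed.

Lemma coset_der1_conjg x y : coset G' (x ^ y) = coset G' x.
Proof.
rewrite -(mulKVg x (x ^ y)) -commgEl coset_der1M.
by rewrite (coset_id (mem_commg _ _)) ?inE ?mulg1.
Qed.

Lemma mem_der1_coset x : (x \in G') = (coset G' x == 1).
Proof. by apply/idP/eqP => [/coset_id|]; last exact: coset_idr (der1_norm x). Qed.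

(* Each step of perm_consP rotates the sequence, which conjugates its product. *)
Lemma coset_der1_seqprod_perm s t :
  perm_eq t s -> coset G' (seqprod t) = coset G' (seqprod s).
Proof.
elim: s t => [|x s IHs] t; first by move/perm_nilP->.
case/perm_consP=> i [u [tiE us]].
rewrite -(cat_take_drop i t) -(coset_der1_conjg _ (seqprod (take i t))).
by rewrite -seqprod_catC -/(seq.rot i t) tiE !seqprod_cons !coset_der1M IHs.
Qed.

Lemma piS_der1 s x : x \in piS s -> (x \in G') = (seqprod s \in G').
Proof.
by case/piSP=> t ts <-; rewrite !mem_der1_coset (coset_der1_seqprod_perm ts).
Qed.

Lemma piS_sub_der1 s : 1 \in piS s -> piS s \subset G'.
Proof.
by move=> s1; apply/subsetP=> x xs; rewrite (piS_der1 xs) -(piS_der1 s1) group1.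
Qed.

Lemma mulg_closed_group_set (A : {set gT}) x :
  x \in A -> {in A &, forall y z, y * z \in A} -> group_set A.
Proof.
move=> Ax mulA; apply/group_setP; split=> //.
have powA n : x ^+ n.+1 \in A.
  by elim: n => [|n IHn]; rewrite ?expg1 // expgS mulA.
by rewrite -(expg_order x) -(prednK (order_gt0 x)).
Qed.

Lemma idemS_group_set s : idemS s -> group_set (piS s).
Proof.
move=> ss; apply: (mulg_closed_group_set (mem_piS_seqprod s)) => x y xs ys.
by rewrite -(simS_piS ss) mem_piS_cat.
Qed.

Lemma idemS_piS_sub_der1 s : idemS s -> piS s \subset G'.
Proof. by case/idemS_group_set/group_setP=> s1 _; apply: piS_sub_der1. Qed.

End DerivedSubgroup.

Section CentralSequences.
Variable gT : finGroupType.
Implicit Types (s t u : seq gT) (g h x y : gT).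
Local Notation central s := (all (fun g => g \in 'Z([set: gT])) s).

Lemma mem_piS_cons_central x u y :
  x \in 'Z([set: gT]) -> (y \in piS (x :: u)) = (x^-1 * y \in piS u).
Proof.
case/centerP=> _ cx; apply/piSP/piSP => [[t txu <-]|[t tu tE]].
  have [p1 [p2 [-> p12u]]] := perm_cons_split txu; exists (p1 ++ p2) => //.
  rewrite !seqprod_cat seqprod_cons (mulgA (seqprod p1)) -(cx (seqprod p1)) ?inE //.
  by rewrite -mulgA mulKg.
by exists (x :: t); rewrite ?perm_cons // seqprod_cons tE mulKVg.
Qed.

Lemma mem_piS_cat_central s u y :
  central s -> (y \in piS (s ++ u)) = ((seqprod s)^-1 * y \in piS u).
Proof.
elim: s y => [|x s IHs] y /=; first by rewrite seqprod_nil invg1 mul1g.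
case/andP=> zx zs.
by rewrite mem_piS_cons_central // IHs // seqprod_cons invMg mulgA.
Qed.

Lemma inB_cat_central s u : central s -> inB s -> inB (s ++ u) = inB u.
Proof.
move=> cs Bs; have s1 : seqprod s = 1.
  move: Bs; rewrite /inB -{1}[s]cats0 mem_piS_cat_central // piS_nil.
  by rewrite inE mulg1 invg_eq1 => /eqP.
by rewrite /inB mem_piS_cat_central // s1 invg1 mul1g.
Qed.

Lemma simS_nil_inB s : simS s [::] -> inB s.
Proof. by move/(_ [::]); rewrite cats0 /inB piS_nil set11 => ->. Qed.

(* Probe with [:: k; h], k = (g h g^-1)^-1: an ordering of s starting with g absorbs k. *)
Lemma simS_nil_central s : simS s [::] -> central s.
Proof.
move=> s0; apply/allP=> g gs; apply/centerP; split=> [|h _]; first exact: in_setT.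
have gsE : perm_eq s (g :: rem g s) by apply: perm_to_rem.
have g'rem : g^-1 \in piS (rem g s).
  by rewrite -inB_cons -(perm_inB gsE) simS_nil_inB.
pose k := (h ^ g^-1)^-1.
have skE : perm_eq (s ++ [:: k; h]) (k :: s ++ [:: h]).
  by apply/permPl; apply: (perm_catCA s [:: k] [:: h]).
have shE : perm_eq (s ++ [:: h]) ([:: g] ++ [:: h] ++ rem g s).
  by rewrite perm_sym perm_catCA perm_sym perm_catC /= perm_cons.
have ghg : g * (h * g^-1) \in piS ([:: g] ++ [:: h] ++ rem g s).
  by apply: mem_piS_cat; last apply: mem_piS_cat; rewrite ?piS_seq1 ?set11.
have := s0 [:: k; h]; rewrite (perm_inB skE) !inB_cons invgK (perm_piS shE).
rewrite conjgE invgK ghg piS_seq1 inE.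
by move/esym/eqP/(congr1 (fun z => z * g)); rewrite -mulgA mulgKV.
Qed.

Lemma simS_nilP s : simS s [::] <-> central s /\ inB s.
Proof.
split=> [s0 | [cs Bs] u]; last by rewrite inB_cat_central.
by split; [apply: simS_nil_central | apply: simS_nil_inB].
Qed.

Lemma simS_nseq_order g : g \in 'Z([set: gT]) -> simS (nseq #[g] g) [::].
Proof.
move=> zg; apply/simS_nilP; split; first by apply/allP=> x /nseqP[->].
by rewrite /inB -(expg_order g) -seqprod_nseq mem_piS_seqprod.
Qed.

End CentralSequences.

Section MinimalIdempotent.
Variable gT : finGroupType.
Implicit Types (s t u a : seq gT) (x y : gT).
Local Notation G' := [~: [set: gT], [set: gT]].

Lemma der1_sub_piS_seqprod a : G' \subset piS a -> seqprod a \in G'.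
Proof. by move=> Ga; rewrite -(piS_der1 (subsetP Ga 1 (group1 _))) group1. Qed.

Lemma inB_cat_der1 a u : G' \subset piS a -> inB (a ++ u) = (seqprod u \in G').
Proof.
move=> Ga; apply/idP/idP => [au1 | uG].
  by rewrite -(groupMl _ (der1_sub_piS_seqprod Ga)) -seqprod_cat -(piS_der1 au1).
rewrite /inB -(mulVg (seqprod u)) mem_piS_cat ?mem_piS_seqprod //.
by rewrite (subsetP Ga) ?groupV.
Qed.

Lemma reesle_der1 a t : G' \subset piS a -> seqprod t \in G' -> reesle a t.
Proof. by move=> Ga tG u; rewrite -catA !inB_cat_der1 // seqprod_cat groupMl. Qed.

Lemma piS_mulg_sub s t : piS s * piS t \subset piS (s ++ t).
Proof. by apply/subsetP=> _ /mulsgP[x y xs yt ->]; apply: mem_piS_cat. Qed.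

Lemma one_piS_flatten (bs : seq (seq gT)) :
  all (fun b => 1 \in piS b) bs -> 1 \in piS (flatten bs).
Proof.
elim: bs => [|b bs IHbs] /=; first by rewrite piS_nil set11.
by case/andP=> b1 /IHbs bs1; rewrite -(mulg1 1) mem_piS_cat.
Qed.

Lemma piS_flatten (bs : seq (seq gT)) b :
  all (fun c => 1 \in piS c) bs -> b \in bs -> piS b \subset piS (flatten bs).
Proof.
elim: bs => [|c bs IHbs] //= /andP[c1 bs1]; rewrite inE => /predU1P[->|bbs].
  exact/piS_catl/one_piS_flatten.
exact: subset_trans (IHbs bs1 bbs) (piS_catr _ c1).
Qed.

Definition commutator_block x y : seq gT := [:: x^-1; y^-1; x; y].

Lemma one_piS_commutator_block x y : 1 \in piS (commutator_block x y).
Proof.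
apply/piSP; exists [:: x^-1; x; y^-1; y]; first by rewrite perm_cons (perm_catCA [:: x] [:: y^-1] [:: y]).
by rewrite !seqprod_cons seqprod_nil mulg1 mulVg mulg1 mulVg.
Qed.

Lemma commg_piS_commutator_block x y : [~ x, y] \in piS (commutator_block x y).
Proof.
apply/piSP; exists (commutator_block x y) => //.
by rewrite !seqprod_cons seqprod_nil mulg1 commgEl conjgE !mulgA.
Qed.

Definition commutators_seq : seq gT :=
  flatten [seq commutator_block p.1 p.2 | p <- enum [set: gT * gT]].

Lemma commg_set_sub_piS : 1 |: commg_set [set: gT] [set: gT] \subset piS commutators_seq.
Proof.
have blocks1 : all (fun b => 1 \in piS b)
    [seq commutator_block p.1 p.2 | p <- enum [set: gT * gT]].
  by apply/allP=> _ /mapP[p _ ->]; apply: one_piS_commutator_block.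
apply/subsetP=> _ /setU1P[->|/imset2P[x y _ _ ->]]; first exact: one_piS_flatten.
apply: subsetP (piS_flatten blocks1 _) _ (commg_piS_commutator_block x y).
by apply/mapP; exists (x, y); rewrite ?mem_enum ?inE.
Qed.

Lemma exists_der1_sub_piS : exists a, G' \subset piS a.
Proof.
have [n GE] := gen_expgs (commg_set [set: gT] [set: gT]).
exists (flatten (nseq n commutators_seq)); rewrite /commutator GE.
elim: n {GE} => [|n IHn]; first by rewrite expg0 piS_nil.
rewrite expgS; exact: subset_trans (mulgSS commg_set_sub_piS IHn) (piS_mulg_sub _ _).
Qed.

End MinimalIdempotent.

Theorem lemma3p7 (gT : finGroupType) :
  (forall S : seq gT, idemS S ->
     group_set (piS S) /\ piS S \subset [~: [set: gT], [set: gT]])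
  /\
  ((forall S : seq gT,
      simS S [::] <-> (all (fun g => g \in 'Z([set: gT])) S /\ inB S))
   /\ (forall g : gT, g \in 'Z([set: gT]) -> simS (nseq #[g] g) [::]))
  /\
  (forall S : seq gT,
     (idemS S /\ (forall T : seq gT, idemS T -> reesle S T))
     <-> piS S = [~: [set: gT], [set: gT]]).
Proof.
split; first by move=> S SS; split; [apply: idemS_group_set | apply: idemS_piS_sub_der1].
split; first by split; [apply: simS_nilP | apply: simS_nseq_order].
move=> S; split=> [[SS Smin] | SG].
  have [T GT] := exists_der1_sub_piS gT.
  have TT : idemS T := reesle_der1 GT (der1_sub_piS_seqprod GT).
  have /group_setP[S1 _] := idemS_group_set SS.
  apply/eqP; rewrite eqEsubset idemS_piS_sub_der1 //=.
  apply/subsetP=> z zG; rewrite -(simS_piS (Smin T TT)) -[z]mul1g.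
  by rewrite mem_piS_cat ?(subsetP GT).
have GS : [~: [set: gT], [set: gT]] \subset piS S by rewrite SG.
split=> [|T TT]; first by apply: reesle_der1 GS (der1_sub_piS_seqprod GS).
exact: reesle_der1 GS (subsetP (idemS_piS_sub_der1 TT) _ (mem_piS_seqprod T)).
Qed.
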